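(* Let $N\ge 2$ and let $H_N$ act on $\mathbb{C}^N$ as in the context. For every $g\in H_N$ and every $x\in\mathbb{C}^N$, $B^H(g\cdot x)=B^H(x)$.
   Context: Let $\zeta=e^{2\pi i/N}$; indices are modulo $N$. $H_N=\{(k,n,m):k,n,m\in\mathbb{Z}_N\}$ with multiplication $(k,n,m)\cdot(k',n',m')=(k+k',n+n',m+m'+kn')$, acting on $\mathbb{C}^N$ through the operators $(T_kx)_j=x_{j+k}$, $(M_nx)_j=\zeta^{nj}x_j$, $(Z_mx)_j=\zeta^m x_j$; the image of $H_N$ is the group generated by these operators. The discrete Fourier transform of $u\in\mathbb{C}^N$ is $\hat u[k]=\sum_{j=0}^{N-1}u_j\zeta^{-jk}$. For $x\in\mathbb{C}^N$ let $y=(|x_0|^2,\dots,|x_{N-1}|^2)\in\mathbb{R}^N$ and $z=(|\hat x[0]|^2,\dots,|\hat x[N-1]|^2)\in\mathbb{R}^N$. Define $B^M(x)(i,j)=\hat y[i]\hat y[j]\hat y[N-i-j]$ and $B^{FM}(x)(i,j)=\hat z[i]\hat z[j]\hat z[N-i-j]$ for $i,j\in\mathbb{Z}_N$, and the Heisenberg bispectrum $B^H(x)=(B^M(x),B^{FM}(x))$. *)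

From mathcomp Require Import all_boot all_algebra.
From mathcomp Require Import reals trigo complex.
Set Implicit Arguments. Unset Strict Implicit. Unset Printing Implicit Defensive.
Import GRing.Theory Num.Theory.
Local Open Scope ring_scope.
Local Open Scope complex_scope.

Section Heisenberg.
Variables (R : realType) (N : nat).

Definition zeta : R[i] := cos (2 * pi / N%:R) +i* sin (2 * pi / N%:R).

(* indices are elements of Z/NZ, represented by 'Z_N (faithful for N >= 2) *)
Definition vecC := 'Z_N -> R[i].

Definition Top (k : 'Z_N) (x : vecC) : vecC := fun j => x (j + k)%R.
Definition Mop (n : 'Z_N) (x : vecC) : vecC := fun j => zeta ^+ (n * j)%N * x j.
Definition Zop (m : 'Z_N) (x : vecC) : vecC := fun j => zeta ^+ m * x j.

Definition heis := ('Z_N * 'Z_N * 'Z_N)%type.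
Definition heis_mul (g h : heis) : heis :=
  let: (k, n, m) := g in let: (k', n', m') := h in
  (k + k', n + n', m + m' + k * n')%R.

(* the representation (k,n,m) |-> Z_m M_n T_k, which is a homomorphism for
   heis_mul and whose image is the group generated by the T_k, M_n, Z_m *)
Definition heis_act (g : heis) (x : vecC) : vecC :=
  let: (k, n, m) := g in Zop m (Mop n (Top k x)).

Definition dft (u : vecC) : vecC :=
  fun k => \sum_(j : 'Z_N) u j * zeta ^- (j * k)%N.

Definition yvec (x : vecC) : vecC := fun j => `|x j| ^+ 2.
Definition zvec (x : vecC) : vecC := yvec (dft x).

(* bispectrum of a vector: B(u)(i,j) = hat u[i] hat u[j] hat u[N-i-j] *)
Definition bispec (u : vecC) : 'Z_N -> 'Z_N -> R[i] :=
  fun i j => dft u i * dft u j * dft u (- (i + j))%R.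

Definition BM (x : vecC) := bispec (yvec x).
Definition BFM (x : vecC) := bispec (zvec x).
Definition BH (x : vecC) := (BM x, BFM x).

End Heisenberg.

From mathcomp Require Import all_boot all_algebra.
From mathcomp Require Import reals trigo complex.
From mathcomp Require Import ring.
From Stdlib Require Import FunctionalExtensionality.
Local Open Scope ring_scope.
Import GRing.Theory Num.Theory.

(* Modulation and the central phase multiply coordinates by roots of unity, so
   the squared moduli [yvec] of [g x] are the translate by [k] of those of [x].
   The DFT exchanges translation and modulation, so [zvec] of [g x] is the
   translate by [-n] of [zvec x].  Finally the bispectrum is translation
   invariant: translating by [k] multiplies [dft u i] by [zeta^(k i)], and the
   three phases [zeta^(k i)], [zeta^(k j)], [zeta^(-k (i + j))] cancel. *)

Section Heisenberg_bispectrum.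
Variables (R : realType) (n : nat).
Local Notation N := n.+2.
Local Notation zeta := (@zeta R N).

Lemma zetaX k :
  zeta ^+ k = (cos ((2 * pi / N%:R) *+ k) +i* sin ((2 * pi / N%:R) *+ k))%C.
Proof.
elim: k => [|k IHk]; first by rewrite expr0 !mulr0n cos0 sin0.
rewrite exprSr IHk; set t := 2 * pi / N%:R.
rewrite [t *+ k.+1]mulrSr cosD sinD /=.
by congr (_ +i* _)%C; rewrite addrC.
Qed.

Lemma zetaXN : zeta ^+ N = 1.
Proof. by rewrite zetaX -mulr_natr divfK ?pnatr_eq0 // mulr_natl cos2pi sin2pi. Qed.

Lemma zetaX_neq0 k : zeta ^+ k != 0.
Proof.
apply: expf_neq0; apply/eqP => zeta0.
by have /eqP := zetaXN; rewrite zeta0 expr0n eq_sym oner_eq0.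
Qed.

Lemma normr_zeta : `|zeta| = 1.
Proof. by apply/eqP; rewrite -(@pexpr_eq1 _ _ N) // -normrX zetaXN normr1. Qed.

Lemma normr_zetaXM k (w : R[i]) : `|zeta ^+ k * w| = `|w|.
Proof. by rewrite normrM normrX normr_zeta expr1n mul1r. Qed.

Lemma zetaX_Zp (a b : nat) : (a%:R : 'Z_N) = b%:R -> zeta ^+ a = zeta ^+ b.
Proof.
suff zeta_mod c : zeta ^+ c = zeta ^+ (c %% N).
  move=> /(congr1 val); rewrite !Zp_nat /= => eq_mod.
  by rewrite zeta_mod [RHS]zeta_mod eq_mod.
by rewrite {1}(divn_eq c N) exprD mulnC exprM zetaXN expr1n mul1r.
Qed.

Lemma zetaXV_Zp (a b c d : nat) :
  (a%:R + d%:R : 'Z_N) = b%:R + c%:R ->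
  zeta ^+ a * zeta ^- b = zeta ^+ c * zeta ^- d.
Proof.
rewrite -!natrD => /zetaX_Zp; rewrite !exprD => eq_ad_bc.
by apply/eqP; rewrite eqr_div ?zetaX_neq0 // eq_ad_bc mulrC.
Qed.

Lemma dft_Top (u : vecC R N) (k i : 'Z_N) :
  dft (Top k u) i = zeta ^+ (k * i)%N * dft u i.
Proof.
rewrite /dft /Top mulr_sumr [RHS](reindex_inj (addIr k)).
apply: eq_bigr => j _; rewrite mulrCA; congr (_ * _).
rewrite -[zeta ^- _]mul1r -(expr0 zeta); apply: zetaXV_Zp.
by rewrite !natrM !natr_Zp add0r mulrDl.
Qed.

Lemma bispec_Top (u : vecC R N) (k : 'Z_N) : bispec (Top k u) = bispec u.
Proof.
apply: functional_extensionality => i; apply: functional_extensionality => j.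
have phases1 : zeta ^+ (k * i)%N * zeta ^+ (k * j)%N
               * zeta ^+ (k * (- (i + j))%R)%N = 1.
  rewrite -!exprD -(expr0 zeta); apply: zetaX_Zp.
  by rewrite !natrD !natrM !natr_Zp -!mulrDr subrr mulr0.
rewrite /bispec !dft_Top -[RHS]mul1r -phases1; ring.
Qed.

Lemma dft_heis_act (x : vecC R N) (k n' m i : 'Z_N) :
  dft (heis_act (k, n', m) x) i =
  zeta ^+ m * zeta ^+ (k * (i - n')%R)%N * dft x (i - n').
Proof.
rewrite /dft /heis_act /Zop /Mop /Top mulr_sumr [RHS](reindex_inj (addIr k)).
apply: eq_bigr => j _.
have phase : zeta ^+ (n' * j)%N * zeta ^- (j * i)%N =
             zeta ^+ (k * (i - n')%R)%N * zeta ^- ((j + k)%R * (i - n')%R)%N.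
  by apply: zetaXV_Zp; rewrite !natrM !natr_Zp; ring.
transitivity (zeta ^+ m * (zeta ^+ (n' * j)%N * zeta ^- (j * i)%N) * x (j + k)).
  by ring.
by rewrite phase; ring.
Qed.

Lemma yvec_heis_act (x : vecC R N) (k n' m : 'Z_N) :
  yvec (heis_act (k, n', m) x) = Top k (yvec x).
Proof.
apply: functional_extensionality => j.
by rewrite /yvec /heis_act /Zop /Mop /Top !normr_zetaXM.
Qed.

Lemma zvec_heis_act (x : vecC R N) (k n' m : 'Z_N) :
  zvec (heis_act (k, n', m) x) = Top (- n') (zvec x).
Proof.
apply: functional_extensionality => i.
by rewrite /zvec /yvec /Top dft_heis_act -mulrA !normr_zetaXM.
Qed.

End Heisenberg_bispectrum.

Theorem theorem4p3 (R : realType) (N : nat) (hN : (2 <= N)%N)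
  (g : heis N) (x : vecC R N) :
  BH (heis_act g x) = BH x.
Proof.
case: N hN g x => [|[|n]] // _ [[k n'] m] x.
rewrite /BH /BM /BFM yvec_heis_act zvec_heis_act.
by rewrite !bispec_Top.
Qed.
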